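(* Let $M_G$ be a connected mixed graph such that $N(M_G)$ has rank $2$. Then $M_G$ is switching equivalent to every connected mixed graph that is cospectral with $M_G$.
   Context: A mixed graph $M_G$ is obtained from a finite simple graph $G$ by orienting the edges of some subset of $E(G)$; it is connected if $G$ is. With $\omega=\frac{1+\mathbf{i}\sqrt3}{2}$, $N(M_G)$ has $(u,v)$-entry $\omega$ if $\overrightarrow{uv}$ is an arc, $\bar\omega$ if $\overrightarrow{vu}$ is an arc, $1$ for an undirected edge, $0$ otherwise; cospectral means the matrices $N$ have the same multiset of eigenvalues. Mixed graphs are considered up to isomorphism. $\mathbb{T}_6=\{1,-1,\omega,\bar\omega,-\omega,-\bar\omega\}$. Given a partition $V(M_G)=\bigcup_{j\in\mathbb{T}_6}V_j$ into six possibly empty sets, an edge or arc $xy$ has type $(j,k)$ if $x\in V_j,y\in V_k$ (arcs directed from $x$ to $y$). The partition is admissible if every undirected edge has type $(j,j)$ or $(j,\omega j)$, and every arc has type $(j,j)$, $(j,\bar\omega j)$ or $(j,-\omega j)$, for some $j$. A three-way switching w.r.t. an admissible partition replaces each undirected edge of type $(j,\omega j)$ by an arc from $V_j$ to $V_{\omega j}$, replaces each arc of type $(j,\bar\omega j)$ by an undirected edge, and reverses each arc of type $(j,-\omega j)$. The converse of a mixed graph reverses all arcs. Two mixed graphs are switching equivalent if one is obtained from the other by a sequence of three-way switchings and taking converses. *)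

From HB Require Import structures.
From mathcomp Require Import all_boot all_order all_algebra all_fingroup all_field.
From Stdlib Require Import Relations.
Set Implicit Arguments. Unset Strict Implicit. Unset Printing Implicit Defensive.
Import Order.TTheory GRing.Theory Num.Theory.
Local Open Scope ring_scope.

(* A mixed graph on vertex set 'I_n: [und u v] = undirected edge uv,
   [arc u v] = arc directed from u to v. *)
Record mixed_graph (n : nat) := MixedGraph { und : rel 'I_n; arc : rel 'I_n }.

Definition mixed_wf n (G : mixed_graph n) : Prop :=
  (forall u, ~~ und G u u) /\ (forall u v, und G u v = und G v u) /\
  (forall u, ~~ arc G u u) /\ (forall u v, arc G u v -> ~~ arc G v u) /\
  (forall u v, und G u v -> ~~ arc G u v).

Definition uadj n (G : mixed_graph n) : rel 'I_n :=
  fun u v => [|| und G u v, arc G u v | arc G v u].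

Definition mconnected n (G : mixed_graph n) : Prop :=
  forall u v : 'I_n, connect (uadj G) u v.

Definition omega : algC := (1 + 'i * sqrtC 3) / 2.

Definition Nmx n (G : mixed_graph n) : 'M[algC]_n :=
  \matrix_(u, v) (if und G u v then 1
                  else if arc G u v then omega
                  else if arc G v u then omega^*
                  else 0).

Definition spectrum n (A : 'M[algC]_n) (s : seq algC) : Prop :=
  char_poly A = \prod_(x <- s) ('X - x%:P).

Definition cospectral n (A B : 'M[algC]_n) : Prop :=
  exists s, spectrum A s /\ spectrum B s.

(* Partitions V = U_{j in T6} V_j encoded by p : 'I_n -> 'I_6, where the
   class index k stands for omega^k (T6 = {omega^k | k < 6}); multiplication
   by omega is k |-> k+1, by conj omega is k |-> k+5, by -omega is k |-> k+4. *)
Definition tdiff n (p : 'I_n -> 'I_6) (x y : 'I_n) : nat :=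
  (p y + 6 - p x) %% 6.

Definition admissible n (G : mixed_graph n) (p : 'I_n -> 'I_6) : Prop :=
  forall x y,
    (und G x y -> tdiff p x y \in [:: 0; 1; 5]%N) /\
    (arc G x y -> tdiff p x y \in [:: 0; 5; 4]%N).

Definition switch n (G : mixed_graph n) (p : 'I_n -> 'I_6) : mixed_graph n :=
  MixedGraph
    (fun u v => [|| und G u v && (tdiff p u v == 0)%N,
                    arc G u v && (tdiff p u v == 5)%N
                  | arc G v u && (tdiff p v u == 5)%N])
    (fun u v => [|| und G u v && (tdiff p u v == 1)%N,
                    arc G u v && (tdiff p u v == 0)%N
                  | arc G v u && (tdiff p v u == 4)%N]).

Definition converse n (G : mixed_graph n) : mixed_graph n :=
  MixedGraph (und G) (fun u v => arc G v u).

Definition mg_eq n (G H : mixed_graph n) : Prop :=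
  forall u v, und G u v = und H u v /\ arc G u v = arc H u v.

(* one step: three-way switching, converse, or isomorphism (graphs are
   considered up to isomorphism) *)
Definition sw_step n (G H : mixed_graph n) : Prop :=
  (exists p, admissible G p /\ mg_eq H (switch G p)) \/
  mg_eq H (converse G) \/
  (exists s : 'S_n, forall u v,
      und H (s u) (s v) = und G u v /\ arc H (s u) (s v) = arc G u v).

Definition switching_equivalent n (G H : mixed_graph n) : Prop :=
  clos_refl_trans _ (@sw_step n) G H \/ clos_refl_trans _ (@sw_step n) H G.

From Pilot Require Import Defs.
From mathcomp Require Import all_boot all_order all_algebra all_fingroup all_field.
From mathcomp Require Import ring zify.
From Stdlib Require Import Relations.
Set Implicit Arguments. Unset Strict Implicit. Unset Printing Implicit Defensive.
Import Order.TTheory GRing.Theory Num.Theory.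
Local Open Scope ring_scope.

(* If N(M_G) has rank 2, all its 3x3 minors vanish.  The minor on a triangle and
   the minors on a path a-b-c-d with a, c non-adjacent force the underlying graph
   to be a complete bipartite graph K_{a,b} whose phases form a coboundary,
   N u v = omega^(q u - q v); a three-way switching then turns M_G into the
   undirected K_{a,b}.  As N is Hermitian, its rank is the number of nonzero
   eigenvalues, so a cospectral connected M_H also has rank 2 and switches to
   some K_{a',b'}.  The eigenvalue sqrt(ab) of N(M_G) is one of N(M_H), whose
   nonzero eigenvalues square to a'b'; with a + b = a' + b' = n this gives
   {a, b} = {a', b'}, and K_{a,b} is isomorphic to K_{a',b'}. *)

Lemma omega_sqr : omega ^+ 2 = omega - 1.
Proof.
have i2 : 'i * 'i = -1 :> algC by rewrite -expr2 sqrCi.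
have s3 : sqrtC 3 * sqrtC 3 = 3 :> algC by rewrite -expr2 sqrtCK.
rewrite /omega expr2.
have -> : (1 + 'i * sqrtC 3) / 2 * ((1 + 'i * sqrtC 3) / 2)
          = (1 + 2 * 'i * sqrtC 3 + ('i * 'i) * (sqrtC 3 * sqrtC 3)) / 4 :> algC.
  by field.
by rewrite i2 s3; field.
Qed.

Lemma omega3 : omega ^+ 3 = -1.
Proof. by rewrite exprS omega_sqr mulrBr -expr2 omega_sqr; ring. Qed.

Lemma omega_prim : 6.-primitive_root omega.
Proof.
have omega6 : omega ^+ 6 = 1 by rewrite (exprM _ 3 2) omega3 sqrrN expr1n.
have [m m_prim m_dvd6] := prim_order_exists (isT : (0 < 6)%N) omega6.
have neq1 k : omega ^+ k != 1 -> ~~ (m %| k)%N by rewrite (prim_order_dvd m_prim).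
have not2 : ~~ (m %| 2)%N.
  apply: neq1; rewrite omega_sqr subr_eq; apply/eqP => om2.
  have := omega_sqr; rewrite om2 => /eqP; rewrite -subr_eq0.
  have -> : (1 + 1) ^+ 2 - (1 + 1 - 1) = 3%:R :> algC by ring.
  by rewrite pnatr_eq0.
have not3 : ~~ (m %| 3)%N.
  apply: neq1; rewrite omega3 -subr_eq0 -opprD oppr_eq0.
  by rewrite -[1 + 1]/(2%:R : algC) pnatr_eq0.
move: m_dvd6 m_prim not2 not3; rewrite dvdn_divisors // !inE.
by case/or4P => /eqP ->.
Qed.

Lemma omega_expE i j : (omega ^+ i == omega ^+ j) = (i == j %[mod 6]).
Proof. exact: (eq_prim_root_expr omega_prim). Qed.

Lemma omegaX_neq0 k : omega ^+ k != 0.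
Proof. by rewrite expf_neq0 // (prim_root_eq0 omega_prim). Qed.

Lemma conj_omega : omega^* = omega ^+ 5.
Proof.
have s3 : (sqrtC 3)^* = sqrtC 3 :> algC.
  by apply/CrealP; apply: ger0_real; rewrite sqrtC_ge0 ler0n.
rewrite (exprD _ 3 2) omega3 omega_sqr /omega.
rewrite rmorphM rmorphD rmorphM /= rmorph1 conjCi s3 fmorphV rmorph_nat.
by field.
Qed.

Lemma conj_omegaX k : (omega ^+ k)^* = omega ^+ (5 * k).
Proof. by rewrite rmorphXn /= conj_omega -exprM. Qed.

Lemma omegaX_add_neq0 k l : (k + l = 0 %[mod 6])%N -> omega ^+ k + omega ^+ l != 0.
Proof.
move=> kl6; apply/eqP => sum0.
(* otherwise omega^(2k) = -omega^(k+l) = omega^3, with 2k even *)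
have opp : omega ^+ l = - omega ^+ k by apply/eqP; rewrite -addr_eq0 addrC sum0.
have kk : - omega ^+ (k + k) = 1.
  by rewrite exprD -mulrN -opp -exprD; apply/eqP; rewrite -(expr0 omega) omega_expE kl6.
have : omega ^+ (k + k) == omega ^+ 3 by rewrite omega3 -kk opprK.
rewrite omega_expE; lia.
Qed.

Lemma mxrank_mxsub (F : fieldType) m1 n1 m2 n2 (f : 'I_m2 -> 'I_m1) (g : 'I_n2 -> 'I_n1)
    (A : 'M[F]_(m1, n1)) :
  (\rank (mxsub f g A) <= \rank A)%N.
Proof.
rewrite -[A in mxsub _ _ A]mul1mx mxsub_mul -[A in colsub _ A]mulmx1 -mulmx_colsub.
by rewrite (leq_trans (mxrankM_maxr _ _)) // mxrankM_maxl.
Qed.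

Lemma det_mxsub_eq0 (F : fieldType) m n (f g : 'I_m -> 'I_n) (A : 'M[F]_n) :
  (\rank A < m)%N -> \det (mxsub f g A) = 0.
Proof.
move=> rkA; apply/eqP; apply: contraTT rkA => det_neq0.
have sub_unit : mxsub f g A \in unitmx by rewrite unitmxE unitfE.
by rewrite -leqNgt -{1}(mxrank_unit sub_unit) mxrank_mxsub.
Qed.

Lemma det_mx33 (R : comNzRingType) (a : nat -> nat -> R) :
  \det (\matrix_(i < 3, j < 3) a i j) =
    a 0 0 * (a 1 1 * a 2 2 - a 1 2 * a 2 1)
  - a 0 1 * (a 1 0 * a 2 2 - a 1 2 * a 2 0)
  + a 0 2 * (a 1 0 * a 2 1 - a 1 1 * a 2 0).
Proof.
rewrite (expand_det_row _ 0) !big_ord_recl big_ord0 /cofactor.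
rewrite !(expand_det_row _ 0) !big_ord_recl !big_ord0 /cofactor !det_mx11 !mxE /=.
by rewrite /bump /=; ring.
Qed.

Lemma rank_le2_minor3 (F : fieldType) n (A : 'M[F]_n) (r c : nat -> 'I_n) :
  (\rank A <= 2)%N ->
    A (r 0) (c 0) * (A (r 1) (c 1) * A (r 2) (c 2) - A (r 1) (c 2) * A (r 2) (c 1))
  - A (r 0) (c 1) * (A (r 1) (c 0) * A (r 2) (c 2) - A (r 1) (c 2) * A (r 2) (c 0))
  + A (r 0) (c 2) * (A (r 1) (c 0) * A (r 2) (c 1) - A (r 1) (c 1) * A (r 2) (c 0))
  = 0.
Proof.
by move=> rkA; rewrite -(det_mx33 (fun i j => A (r i) (c j))) det_mxsub_eq0.
Qed.

Lemma char_poly_similar (F : fieldType) n (P A : 'M[F]_n) : P \in unitmx ->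
  char_poly (invmx P *m A *m P) = char_poly A.
Proof.
move=> P_unit; rewrite /char_poly /char_poly_mx !map_mxM map_invmx.
set Q := map_mx polyC P.
have Q_unit : Q \in unitmx by rewrite map_unitmx.
have X_conj : ('X%:M : 'M_n) = invmx Q *m 'X%:M *m Q.
  by rewrite mul_mx_scalar -scalemxAl mulVmx // scalemx1.
rewrite {1}X_conj -mulmxBl -mulmxBr !det_mulmx mulrC mulrA -det_mulmx mulmxV //.
by rewrite det1 mul1r.
Qed.

Lemma rank_diag_mx (F : fieldType) n (d : 'rV[F]_n) :
  \rank (diag_mx d) = #|[pred i | d 0 i != 0]|.
Proof.
have diag_sum : (diag_mx d :=: \sum_(i | d 0 i != 0) <<delta_mx 0 i : 'rV[F]_n>>)%MS.
  apply/eqmxP/andP; split.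
    apply/row_subP => i; rewrite row_diag_mx.
    have [->|d_neq0] := eqVneq (d 0 i) 0; first by rewrite scale0r sub0mx.
    by rewrite scalemx_sub // (sumsmx_sup i) // genmxE.
  apply/sumsmx_subP => i d_neq0; rewrite genmxE.
  have -> : (delta_mx 0 i : 'rV[F]_n) = (d 0 i)^-1 *: row i (diag_mx d).
    by rewrite row_diag_mx scalerA mulVf // scale1r.
  by rewrite scalemx_sub // row_sub.
rewrite diag_sum (mxdirectP (mxdirect_delta _ (in2W (@inj_id _)))) /=.
by rewrite -sum1_card; apply: eq_bigr => i _; rewrite mxrank_gen mxrank_delta.
Qed.

Lemma rank_normalmx n (A : 'M[algC]_n) (s : seq algC) : A \is normalmx ->
  spectrum A s -> \rank A = count (predC1 0) s.
Proof.
move=> /orthomx_spectralP A_spectral charA.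
have charD : char_poly A = char_poly (diag_mx (spectral_diag A)).
  by rewrite {1}A_spectral char_poly_similar ?spectral_unit.
move: charA; rewrite /spectrum charD char_poly_trig ?diag_mx_is_trig //.
rewrite -(big_map (fun i => diag_mx (spectral_diag A) i i) predT (fun x => 'X - x%:P)).
move=> /prod_XsubC_eq /seq.permP <-.
rewrite [in LHS]A_spectral mxrankMfree ?row_free_unit ?spectral_unit //.
rewrite eqmxMfull ?row_full_unit ?unitmx_inv ?spectral_unit // rank_diag_mx.
by rewrite cardE count_map /enum_mem size_filter; apply: eq_count => i; rewrite /= mxE eqxx.
Qed.

Lemma cospectral_normalmx_rank n (A B : 'M[algC]_n) : A \is normalmx -> B \is normalmx ->
  cospectral A B -> \rank A = \rank B.
Proof. by move=> nA nB [s [sA sB]]; rewrite (rank_normalmx nA sA) (rank_normalmx nB sB). Qed.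

Lemma cospectral_eigenvalue n (A B : 'M[algC]_n) (a : algC) : cospectral A B ->
  eigenvalue A a -> eigenvalue B a.
Proof. by move=> [s [sA sB]]; rewrite !eigenvalue_root_char sA sB. Qed.

Definition phase n (G : mixed_graph n) (u v : 'I_n) : nat :=
  if und G u v then 0 else if Defs.arc G u v then 1 else 5.

Section MixedGraph.
Variables (n : nat) (G : mixed_graph n).

Lemma NmxE u v : Nmx G u v = if uadj G u v then omega ^+ phase G u v else 0.
Proof.
rewrite mxE /uadj /phase; case: (und G u v) => //=; case: (Defs.arc G u v) => //=.
by case: (Defs.arc G v u) => //=; rewrite conj_omega.
Qed.

Lemma phase_le5 u v : (phase G u v <= 5)%N.
Proof. by rewrite /phase; case: (und G u v) => //; case: (Defs.arc G u v). Qed.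

Lemma phase_values u v : phase G u v \in [:: 0; 1; 5]%N.
Proof. by rewrite /phase; case: ifP => _ //; case: ifP. Qed.

Lemma und_phaseE u v : und G u v = uadj G u v && (phase G u v == 0%N).
Proof.
rewrite /uadj /phase.
by case: (und G u v); case: (Defs.arc G u v); case: (Defs.arc G v u).
Qed.

Hypothesis G_wf : mixed_wf G.

Lemma uadj_sym u v : uadj G u v = uadj G v u.
Proof.
have [_ [und_sym _]] := G_wf.
by rewrite /uadj und_sym; congr orb; exact: orbC.
Qed.

Lemma uadj_irr u : uadj G u u = false.
Proof.
have [und_irr [_ [arc_irr _]]] := G_wf.
by rewrite /uadj (negbTE (und_irr u)) (negbTE (arc_irr u)).
Qed.

Lemma phase_sym u v : uadj G u v -> (phase G u v + phase G v u = 0 %[mod 6])%N.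
Proof.
have [_ [und_sym [_ [arc_asym _]]]] := G_wf.
rewrite /uadj /phase (und_sym v u); case: (und G u v) => //=.
case uv: (Defs.arc G u v) => /=; first by rewrite (negbTE (arc_asym _ _ uv)).
by move=> ->.
Qed.

Lemma arc_phaseE u v : Defs.arc G u v = uadj G u v && (phase G u v == 1%N).
Proof.
have [_ [_ [_ [_ und_arc]]]] := G_wf; rewrite /uadj /phase.
case: (boolP (und G u v)) => [/und_arc/negbTE ->|_] //=.
by case: (Defs.arc G u v) => //=; rewrite andbF.
Qed.

Lemma arcC_phaseE u v : Defs.arc G v u = uadj G u v && (phase G u v == 5%N).
Proof.
have [_ [und_sym [_ [arc_asym und_arc]]]] := G_wf; rewrite /uadj /phase.
case: (boolP (und G u v)) => [uv|_] /=.
  by rewrite und_sym in uv; rewrite (negbTE (und_arc _ _ uv)).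
by case: (boolP (Defs.arc G u v)) => [/arc_asym/negbTE ->|_] //; case: (Defs.arc G v u).
Qed.

Lemma Nmx_hermitian : map_mx Num.Def.conjC (Nmx G)^T = Nmx G.
Proof.
apply/matrixP => u v; rewrite mxE [(Nmx G)^T u v]mxE !NmxE (uadj_sym v u).
case: ifP => [uv|_]; last by rewrite rmorph0.
rewrite conj_omegaX; apply/eqP; rewrite omega_expE.
by have := phase_sym uv; lia.
Qed.

Lemma Nmx_normal : Nmx G \is normalmx.
Proof. by apply/normalmxP; rewrite Nmx_hermitian. Qed.

End MixedGraph.

Section Rank2.
Variables (n : nat) (G : mixed_graph n).
Hypotheses (G_wf : mixed_wf G) (rkG : (\rank (Nmx G) <= 2)%N).

Lemma rank2_no_triangle u v w : uadj G u v -> uadj G v w -> uadj G w u -> False.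
Proof.
move=> uv vw wu.
have vu : uadj G v u by rewrite (uadj_sym G_wf).
have wv : uadj G w v by rewrite (uadj_sym G_wf).
have uw : uadj G u w by rewrite (uadj_sym G_wf).
have := rank_le2_minor3 (fun i => nth u [:: u; v; w] i) (fun i => nth u [:: u; v; w] i) rkG.
rewrite /= !NmxE !(uadj_irr G_wf) uv vw wu vu wv uw => minor0.
have cycles0 : omega ^+ (phase G u v + phase G v w + phase G w u)
             + omega ^+ (phase G u w + phase G w v + phase G v u) = 0.
  by rewrite !exprD -[RHS]minor0; ring.
move: cycles0; apply/eqP/omegaX_add_neq0.
by have := phase_sym G_wf uv; have := phase_sym G_wf vw; have := phase_sym G_wf wu; lia.
Qed.

Lemma rank2_path3 a b c d : uadj G a b -> uadj G b c -> uadj G c d -> ~~ uadj G a c ->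
  uadj G a d /\ (phase G a d + phase G c b = phase G a b + phase G c d %[mod 6])%N.
Proof.
move=> ab bc cd not_ac.
have cb : uadj G c b by rewrite (uadj_sym G_wf).
have := rank_le2_minor3 (fun i => nth a [:: a; c; b] i) (fun i => nth a [:: b; d; c] i) rkG.
rewrite /= [Nmx G a d]NmxE !NmxE !(uadj_irr G_wf) ab bc cd cb (negbTE not_ac).
case: (boolP (uadj G a d)) => [ad|not_ad] minor0; last first.
  have : omega ^+ (phase G b c + phase G a b + phase G c d) = 0.
    by rewrite !exprD -[RHS]minor0; ring.
  by move/eqP; rewrite (negbTE (omegaX_neq0 _)).
split => //.
have : omega ^+ phase G b c
       * (omega ^+ (phase G a b + phase G c d) - omega ^+ (phase G a d + phase G c b)) = 0.
  by rewrite !exprD -[RHS]minor0; ring.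
move/eqP; rewrite mulf_eq0 (negbTE (omegaX_neq0 _)) /= subr_eq0 omega_expE.
by move/eqP.
Qed.

End Rank2.

Definition phased_biclique n (G : mixed_graph n) (S : {set 'I_n}) (q : 'I_n -> nat) :=
  [/\ S != set0, ~: S != set0,
      forall u v, uadj G u v = ((u \in S) != (v \in S)) &
      forall u v, uadj G u v -> (phase G u v + q v = q u %[mod 6])%N].

Section Rank2Structure.
Variables (n : nat) (G : mixed_graph n) (r0 r1 : 'I_n).
Hypotheses (G_wf : mixed_wf G) (G_conn : mconnected G) (rkG : (\rank (Nmx G) <= 2)%N).
Hypothesis r0r1 : uadj G r0 r1.

Let r1r0 : uadj G r1 r0. Proof. by rewrite (uadj_sym G_wf). Qed.

Lemma rank2_adj_edge u : uadj G u r1 || uadj G u r0.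
Proof.
pose P := [pred x | uadj G x r1 || uadj G x r0].
suff P_closed : closed (uadj G) P.
  by have := closed_connect P_closed (G_conn r0 u); rewrite !inE r0r1 => <-.
suff P_adj x y : uadj G x y -> x \in P -> y \in P.
  by move=> x y xy; apply/idP/idP; apply: P_adj; rewrite // (uadj_sym G_wf).
move=> xy; rewrite !inE; have yx : uadj G y x by rewrite (uadj_sym G_wf).
case/orP => [xr1|xr0].
  case: (boolP (uadj G y r1)) => //= not_yr1.
  by have [] := rank2_path3 G_wf rkG yx xr1 r1r0 not_yr1.
case: (boolP (uadj G y r0)) => [|not_yr0]; first by rewrite orbT.
by have [->] := rank2_path3 G_wf rkG yx xr0 r0r1 not_yr0.
Qed.

Let S := [set u | uadj G u r1].

Lemma rank2_cross u v : u \in S -> v \notin S ->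
  uadj G u v /\ (phase G u v + phase G r0 r1 = phase G u r1 + phase G r0 v %[mod 6])%N.
Proof.
rewrite !inE => ur1 not_vr1.
have r0v : uadj G r0 v.
  by move: (rank2_adj_edge v); rewrite (negbTE not_vr1) (uadj_sym G_wf).
have not_ur0 : ~~ uadj G u r0.
  apply/negP => ur0; apply: (rank2_no_triangle G_wf rkG ur0 r0r1).
  by rewrite (uadj_sym G_wf).
exact: (rank2_path3 G_wf rkG ur1 r1r0 r0v not_ur0).
Qed.

Lemma rank2_uadj_sides u v : uadj G u v = ((u \in S) != (v \in S)).
Proof.
have r0_adj w : w \notin S -> uadj G w r0.
  by rewrite inE => /negbTE not_wr1; move: (rank2_adj_edge w); rewrite not_wr1.
case: (boolP (u \in S)) => uS; case: (boolP (v \in S)) => vS /=.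
- apply/negP => uv; move: uS vS; rewrite !inE => ur1 vr1.
  by apply: (rank2_no_triangle G_wf rkG uv vr1); rewrite (uadj_sym G_wf).
- by have [] := rank2_cross uS vS.
- by rewrite (uadj_sym G_wf); have [] := rank2_cross vS uS.
- apply/negP => uv; apply: (rank2_no_triangle G_wf rkG uv (r0_adj v vS)).
  by rewrite (uadj_sym G_wf); apply: r0_adj.
Qed.

(* [q u] is the phase along the path [u r1], resp. [u r0 r1]. *)
Let q u := if u \in S then phase G u r1 else (phase G r0 r1 + 5 * phase G r0 u)%N.

Lemma rank2_phased_biclique : phased_biclique G S q.
Proof.
split.
- by apply/set0Pn; exists r0; rewrite inE.
- by apply/set0Pn; exists r1; rewrite !inE (uadj_irr G_wf).
- exact: rank2_uadj_sides.
have cross_phase u v : u \in S -> v \notin S -> (phase G u v + q v = q u %[mod 6])%N.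
  by move=> uS vS; have [_] := rank2_cross uS vS; rewrite /q uS (negbTE vS); lia.
move=> u v uv; move: (uv); rewrite rank2_uadj_sides.
case: (boolP (u \in S)) => uS; case: (boolP (v \in S)) => vS //= _; first exact: cross_phase.
by have := cross_phase v u vS uS; have := phase_sym G_wf uv; lia.
Qed.

End Rank2Structure.

Lemma mconnected_edge n (G : mixed_graph n) : mconnected G -> (1 < n)%N ->
  exists r0 r1, uadj G r0 r1.
Proof.
move=> G_conn n_gt1.
have /connectP [[|r1 p] path_p last_p] := G_conn (Ordinal (ltnW n_gt1)) (Ordinal n_gt1).
  by move: last_p => /(congr1 val).
by exists (Ordinal (ltnW n_gt1)), r1; case/andP: path_p.
Qed.

Lemma rank2_structure n (G : mixed_graph n) : mixed_wf G -> mconnected G ->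
  (\rank (Nmx G) <= 2)%N -> (1 < n)%N -> exists S q, phased_biclique G S q.
Proof.
move=> G_wf G_conn rkG n_gt1; have [r0 [r1 r0r1]] := mconnected_edge G_conn n_gt1.
by eexists; eexists; exact: rank2_phased_biclique G_wf G_conn rkG r0r1.
Qed.

Section PhasedBiclique.
Variables (n : nat) (G : mixed_graph n) (S : {set 'I_n}) (q : 'I_n -> nat).
Hypothesis GSq : phased_biclique G S q.

Let c u := omega ^+ q u.
Let c_neq0 u : c u != 0. Proof. exact: omegaX_neq0. Qed.

Lemma phased_biclique_NmxE u v :
  Nmx G u v = if (u \in S) != (v \in S) then c u / c v else 0.
Proof.
case: GSq => _ _ sides phaseq; rewrite NmxE sides.
case: ifP => uv //; rewrite -sides in uv.
apply: (canRL (mulfK (c_neq0 _))); rewrite -exprD; apply/eqP.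
by rewrite omega_expE; apply/eqP; apply: phaseq.
Qed.

Lemma phased_biclique_eigenvalue :
  eigenvalue (Nmx G) (sqrtC #|S|%:R * sqrtC #|~: S|%:R).
Proof.
case: GSq => /set0Pn [u0 u0S] /set0Pn [v0 v0S] _ _.
set a := sqrtC #|S|%:R; set b := sqrtC #|~: S|%:R.
have sqr_sqrt k : sqrtC (k%:R : algC) * sqrtC k%:R = k%:R by rewrite -expr2 sqrtCK.
apply/eigenvalueP; exists (\row_u ((if u \in S then b else a) / c u)).
  apply/rowP => v; rewrite !mxE.
  under eq_bigr => u _ do rewrite mxE phased_biclique_NmxE.
  transitivity (\sum_(u in if v \in S then ~: S else S) (if v \in S then a else b) / c v).
    rewrite [RHS]big_mkcond /=; apply: eq_bigr => u _.
    by case: (v \in S); rewrite ?inE; case: (u \in S); rewrite /= ?mulr0 // mulrA divfK.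
  rewrite sumr_const -mulr_natr; case: (v \in S).
    by rewrite -(sqr_sqrt #|~: S|) /a /b; ring.
  by rewrite -(sqr_sqrt #|S|) /a /b; ring.
apply/eqP => /rowP /(_ u0); rewrite !mxE u0S => /eqP.
rewrite mulf_eq0 invr_eq0 (negbTE (c_neq0 _)) orbF sqrtC_eq0 pnatr_eq0.
by apply/negP; rewrite -lt0n card_gt0; apply/set0Pn; exists v0.
Qed.

Lemma phased_biclique_eigenvalue_sqr l : eigenvalue (Nmx G) l -> l != 0 ->
  l ^+ 2 = (#|S| * #|~: S|)%:R.
Proof.
case/eigenvalueP => y yN y_neq0 l_neq0.
(* [w] is an eigenvector of the adjacency matrix of the complete bipartite graph. *)
pose w u := y 0 u * c u.
set wS := \sum_(u in S) w u; set wSC := \sum_(u in ~: S) w u.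
have l_w v : l * w v = if v \in S then wSC else wS.
  have -> : (if v \in S then wSC else wS) = \sum_(u | (u \in S) != (v \in S)) w u.
    by rewrite /wS /wSC; case: (v \in S); apply: eq_bigl => u; rewrite ?inE; case: (u \in S).
  rewrite /w mulrA; move/rowP: yN => /(_ v); rewrite mxE [(l *: y) 0 v]mxE => <-.
  rewrite mulr_suml [RHS]big_mkcond; apply: eq_bigr => u _.
  by rewrite phased_biclique_NmxE; case: ifP; rewrite ?mulr0 ?mul0r // -mulrA divfK.
have l_wS : l * wS = #|S|%:R * wSC.
  rewrite mulr_sumr (eq_bigr (fun=> wSC)) ?sumr_const ?mulr_natl // => v vS.
  by rewrite l_w vS.
have l_wSC : l * wSC = #|~: S|%:R * wS.
  rewrite mulr_sumr (eq_bigr (fun=> wS)) ?sumr_const ?mulr_natl // => v.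
  by rewrite inE l_w => /negbTE ->.
apply/eqP; apply/negPn/negP => l2_neq; apply/negP: y_neq0; apply/negPn/eqP.
have eq0 x : l ^+ 2 * x = (#|S| * #|~: S|)%:R * x -> x = 0.
  by move/eqP; rewrite -subr_eq0 -mulrBl mulf_eq0 subr_eq0 (negbTE l2_neq) => /eqP.
have wS0 : wS = 0 by apply: eq0; rewrite expr2 -mulrA l_wS mulrCA l_wSC natrM; ring.
have wSC0 : wSC = 0 by apply: eq0; rewrite expr2 -mulrA l_wSC mulrCA l_wS natrM; ring.
apply/rowP => v; have := l_w v; rewrite wS0 wSC0 if_same mxE => /eqP.
by rewrite !mulf_eq0 (negbTE l_neq0) (negbTE (c_neq0 v)) orbF => /eqP.
Qed.

End PhasedBiclique.

Definition complete_bipartite n (S : {set 'I_n}) : mixed_graph n :=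
  MixedGraph (fun u v => (u \in S) != (v \in S)) (fun _ _ => false).

Lemma phased_biclique_setC n (G : mixed_graph n) S q :
  phased_biclique G S q -> phased_biclique G (~: S) q.
Proof.
case=> S_neq0 SC_neq0 sides phaseq; split => //; first by rewrite setCK.
by move=> u v; rewrite sides !inE; case: (u \in S); case: (v \in S).
Qed.

(* Switching by the partition [u |-> q u mod 6] conjugates [Nmx G] by
   [diag(omega ^+ q)], which cancels all phases. *)
Lemma phased_biclique_switch_to n (G : mixed_graph n) S q :
  mixed_wf G -> phased_biclique G S q -> sw_step G (complete_bipartite S).
Proof.
move=> G_wf [_ _ sides phaseq].
pose p u : 'I_6 := inZp (q u).
have tdiff_phase x y : uadj G x y -> tdiff p x y = ((6 - phase G x y) %% 6)%N.
  by move=> xy; rewrite /tdiff /=; have := phaseq x y xy; have := phase_le5 G x y; lia.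
have tdiffC_phase x y : uadj G x y -> tdiff p y x = phase G x y.
  by move=> xy; rewrite /tdiff /=; have := phaseq x y xy; have := phase_le5 G x y; lia.
left; exists p; split.
  move=> x y; rewrite und_phaseE // arc_phaseE //.
  by split=> /andP [xy /eqP ph]; rewrite tdiff_phase // ph.
move=> u v /=; rewrite -sides und_phaseE // arc_phaseE // !arcC_phaseE //.
case: (boolP (uadj G u v)) => //= uv; rewrite tdiff_phase // tdiffC_phase //.
by move: (phase_values G u v); rewrite !inE => /or3P [] /eqP ->.
Qed.

Lemma phased_biclique_switch_from n (G : mixed_graph n) S q :
  mixed_wf G -> phased_biclique G S q -> sw_step (complete_bipartite S) G.
Proof.
move=> G_wf [_ _ sides phaseq].
pose p u : 'I_6 := inZp (6 - q u %% 6).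
have tdiff_phase x y : uadj G x y -> tdiff p x y = phase G x y.
  by move=> xy; rewrite /tdiff /=; have := phaseq x y xy; have := phase_le5 G x y; lia.
left; exists p; split.
  move=> x y; split => //= xy; rewrite -sides in xy.
  by rewrite tdiff_phase ?xy // phase_values.
move=> u v /=; rewrite und_phaseE arc_phaseE // -!sides !orbF.
by case: (boolP (uadj G u v)) => //= uv; rewrite tdiff_phase.
Qed.

Lemma perm_of_card_eq n (S S' : {set 'I_n}) : #|S| = #|S'| ->
  exists s : 'S_n, forall u, (s u \in S') = (u \in S).
Proof.
move=> card_eq.
pose t (A : {set 'I_n}) := [tuple (i \in A) | i < n].
have count_t A b : count_mem b (t A) = #|[pred i | (i \in A) == b]|.
  by rewrite /t /= count_map enumT cardE /enum_mem size_filter.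
have count_tT A : count_mem true (t A) = #|A|.
  by rewrite count_t; apply: eq_card => i; rewrite inE /= eqb_id.
have count_tF A : count_mem false (t A) = #|~: A|.
  by rewrite count_t; apply: eq_card => i; rewrite !inE /= eqbF_neg.
have tS : perm_eq (t S') (t S).
  apply/allP => -[] _ /=; rewrite ?count_tT ?count_tF -?card_eq //.
  by rewrite -(eqn_add2l #|S|) cardsC {1}card_eq cardsC.
have [s ts] := tuple_permP tS.
exists s^-1%g => u.
have := congr1 (fun x : n.-tuple bool => tnth x (s^-1%g u)) (val_inj ts).
by rewrite /= /t !tnth_mktuple permKV.
Qed.

Lemma complete_bipartite_iso n (S S' : {set 'I_n}) : #|S| = #|S'| ->
  sw_step (complete_bipartite S) (complete_bipartite S').
Proof.
by case/perm_of_card_eq => s sS; right; right; exists s => u v /=; rewrite !sS.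
Qed.

Lemma phased_biclique_switching n (G H : mixed_graph n) S S' q q' :
  mixed_wf G -> mixed_wf H -> phased_biclique G S q -> phased_biclique H S' q' ->
  #|S| = #|S'| -> clos_refl_trans _ (@sw_step n) G H.
Proof.
move=> G_wf H_wf GSq HSq card_eq.
apply: rt_trans (rt_step _ _ _ _ (phased_biclique_switch_to G_wf GSq)) _.
apply: rt_trans (rt_step _ _ _ _ (complete_bipartite_iso card_eq)) _.
exact: rt_step (phased_biclique_switch_from H_wf HSq).
Qed.

Lemma cospectral_phased_biclique_card n (G H : mixed_graph n) S S' q q' :
  phased_biclique G S q -> phased_biclique H S' q' -> cospectral (Nmx G) (Nmx H) ->
  (#|S| * #|~: S| = #|S'| * #|~: S'|)%N.
Proof.
move=> GSq HSq cospGH.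
have eigH := cospectral_eigenvalue cospGH (phased_biclique_eigenvalue GSq).
have sqrt_card_neq0 (A : {set 'I_n}) : A != set0 -> sqrtC (#|A|%:R : algC) != 0.
  by rewrite -card_gt0 sqrtC_eq0 pnatr_eq0 -lt0n.
have [S_neq0 SC_neq0 _ _] := GSq.
have := phased_biclique_eigenvalue_sqr HSq eigH.
rewrite mulf_neq0 ?sqrt_card_neq0 // exprMn !sqrtCK -natrM => /(_ isT) /eqP.
by rewrite eqr_nat => /eqP.
Qed.

Theorem theorem5p10 (n : nat) (G : mixed_graph n) :
  mixed_wf G -> mconnected G -> \rank (Nmx G) = 2%N ->
  forall H : mixed_graph n, mixed_wf H -> mconnected H ->
    cospectral (Nmx G) (Nmx H) -> switching_equivalent G H.
Proof.
move=> G_wf G_conn rkG H H_wf H_conn cospGH.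
have n_gt1 : (1 < n)%N by rewrite -rkG rank_leq_row.
have rkH : \rank (Nmx H) = 2%N.
  by rewrite -(cospectral_normalmx_rank (Nmx_normal G_wf) (Nmx_normal H_wf) cospGH).
have [S [q GSq]] := rank2_structure G_wf G_conn (eq_leq rkG) n_gt1.
have [S' [q' HSq]] := rank2_structure H_wf H_conn (eq_leq rkH) n_gt1.
have cardM := cospectral_phased_biclique_card GSq HSq cospGH.
have cardD : (#|S| + #|~: S| = #|S'| + #|~: S'|)%N by rewrite !cardsC.
left; have [card_eq|card_eq] : #|S| = #|S'| \/ #|S| = #|~: S'| by nia.
  exact: phased_biclique_switching G_wf H_wf GSq HSq card_eq.
exact: phased_biclique_switching G_wf H_wf GSq (phased_biclique_setC HSq) card_eq.
Qed.
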